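(* Let $A$ be a commutative ring, $I$ a proper ideal of $A$, and $R = A \propto A/I$ the trivial ring extension of $A$ by $A/I$. Then the $R$-modules $I \propto A/I$ and $0 \propto A/I$ (ideals of $R$) both have infinite projective dimension over $R$.
   Context: All rings are commutative with identity and all modules are unital. For a ring $A$ and an $A$-module $E$, the trivial ring extension $A \propto E$ is the ring with underlying additive group $A \times E$ and multiplication $(a,e)(a',e') = (aa', ae' + a'e)$. For an ideal $I$ of $A$ and an $A$-submodule $E'$ of $E$ with $IE \subseteq E'$, $I \propto E' = \{(a,e) : a \in I, e \in E'\}$ is an ideal of $A \propto E$. *)

From HB Require Import structures.
From mathcomp Require Import all_boot all_order all_algebra.
From mathcomp Require Import generic_quotient ring_quotient.

Set Implicit Arguments.
Unset Strict Implicit.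
Unset Printing Implicit Defensive.

Import GRing.Theory.
Local Open Scope ring_scope.

Section TrivExt.
Variables (A : comNzRingType) (E : lmodType A).

Definition triv_ext : Type := (A * E)%type.
HB.instance Definition _ := GRing.Zmodule.on triv_ext.

Definition te_one : triv_ext := (1, 0).
Definition te_mul (x y : triv_ext) : triv_ext :=
  (x.1 * y.1, x.1 *: y.2 + y.1 *: x.2).

Lemma te_mulA : associative te_mul.
Proof.
case=> a e [b f] [c g]; rewrite /te_mul /=; congr pair; first by rewrite mulrA.
rewrite !scalerDr !scalerA addrA; congr (_ + _ + _); by rewrite mulrC.
Qed.

Lemma te_mulC : commutative te_mul.
Proof. by case=> a e [b f]; rewrite /te_mul /= mulrC addrC. Qed.

Lemma te_mul1 : left_id te_one te_mul.
Proof. by case=> a e; rewrite /te_mul /= mul1r scale1r scaler0 addr0. Qed.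

Lemma te_mulDl : left_distributive te_mul +%R.
Proof.
case=> a e [b f] [c g]; rewrite /te_mul /=; congr pair; first by rewrite mulrDl.
rewrite scalerDl scalerDr -!addrA; congr (_ + _); rewrite addrCA; done.
Qed.

Lemma te_one_neq0 : te_one != 0.
Proof. by rewrite /te_one xpair_eqE oner_eq0. Qed.

HB.instance Definition _ := GRing.Zmodule_isComNzRing.Build triv_ext
  te_mulA te_mulC te_mul1 te_mulDl te_one_neq0.

Lemma triv_ext_mulE (x y : triv_ext) :
  x * y = (x.1 * y.1, x.1 *: y.2 + y.1 *: x.2) :> (A * E)%type.
Proof. by []. Qed.

End TrivExt.

Section QuotMod.
Variables (A : comNzRingType) (I : idealr A).

Definition quotmod : Type := {ideal_quot I}.
HB.instance Definition _ := GRing.ComNzRing.on quotmod.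

Definition qscale (a : A) (x : quotmod) : quotmod := (\pi_({ideal_quot I}) a)%qT * x.

Lemma qscaleA a b v : qscale a (qscale b v) = qscale (a * b) v.
Proof. by rewrite /qscale mulrA rmorphM. Qed.

Lemma qscale1 : left_id 1 qscale.
Proof. by move=> v; rewrite /qscale rmorph1 mul1r. Qed.

Lemma qscaleDr : right_distributive qscale +%R.
Proof. by move=> a u v; rewrite /qscale mulrDr. Qed.

Lemma qscaleDl v : {morph qscale^~ v : a b / a + b}.
Proof. by move=> a b; rewrite /qscale rmorphD mulrDl. Qed.

HB.instance Definition _ := GRing.Zmodule_isLmodule.Build A quotmod
  qscaleA qscale1 qscaleDr qscaleDl.

End QuotMod.

Section SubMod.
Variables (R : nzRingType) (V : lmodType R) (S : submodClosed V).

Record submod := SubMod { submod_val :> V; _ : submod_val \in S }.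
HB.instance Definition _ := [isSub for submod_val].
HB.instance Definition _ := [Choice of submod by <:].
HB.instance Definition _ := [SubChoice_isSubLmodule of submod by <:].

End SubMod.

Section Ideals.
Variables (A : comNzRingType) (I : idealr A).

Definition TE := triv_ext (quotmod I).

Definition I_prop_pred : {pred TE^o} := [pred x : TE^o | x.1 \in I].
Definition zero_prop_pred : {pred TE^o} := [pred x : TE^o | x.1 == 0].

Lemma I_prop_closed : subsemimod_closed I_prop_pred.
Proof.
split; first split.
- by rewrite inE /= rpred0.
- by case=> a e [b f]; rewrite !inE /=; exact: rpredD.
- by move=> r [a e]; rewrite !inE /= => Ha; exact: idealMr.
Qed.

Lemma zero_prop_closed : subsemimod_closed zero_prop_pred.
Proof.
split; first split.
- by rewrite inE /=.
- by case=> a e [b f]; rewrite !inE /= => /eqP-> /eqP->; rewrite addr0.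
- by move=> r [a e]; rewrite !inE /= => /eqP->; rewrite mulr0.
Qed.

HB.instance Definition _ := GRing.isSubmodClosed.Build TE TE^o I_prop_pred I_prop_closed.
HB.instance Definition _ := GRing.isSubmodClosed.Build TE TE^o zero_prop_pred zero_prop_closed.

Definition I_prop_mod : lmodType TE := submod I_prop_pred.
Definition zero_prop_mod : lmodType TE := submod zero_prop_pred.

End Ideals.

Section ProjDim.
Variable R : comNzRingType.

Definition projective (P : lmodType R) : Prop :=
  forall (M N : lmodType R) (f : {linear M -> N}) (g : {linear P -> N}),
    (forall y, exists x, f x = y) ->
    exists h : {linear P -> M}, forall x, f (h x) = g x.

Definition exact_at (M N K : lmodType R) (f : M -> N) (g : N -> K) : Prop :=
  forall y, g y = 0 <-> exists x, f x = y.

(* M admits a projective resolution of length <= n: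
   0 -> P_n -> ... -> P_1 -> P_0 -> M -> 0 exact, P_i projective
   (encoded with P_i = 0 for i > n). *)
Definition proj_dim_le (M : lmodType R) (n : nat) : Prop :=
  exists (P : nat -> lmodType R) (d : forall i, {linear P i.+1 -> P i})
         (eps : {linear P 0 -> M}),
    [/\ forall i, projective (P i),
        forall i, (n < i)%N -> forall x : P i, x = 0,
        forall y : M, exists x, eps x = y,
        exact_at (d 0) eps &
        forall i, exact_at (d i.+1) (d i)].

Definition infinite_proj_dim (M : lmodType R) : Prop :=
  forall n, ~ proj_dim_le M n.

End ProjDim.

From HB Require Import structures.
From mathcomp Require Import all_boot all_order all_algebra.
From mathcomp Require Import generic_quotient ring_quotient.
From mathcomp Require Import finmap.
From mathcomp.multinomials Require Import monalg.

Set Implicit Arguments.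
Unset Strict Implicit.
Unset Printing Implicit Defensive.
Import GRing.Theory.
Local Open Scope ring_scope.

(* Let x = (0, 1) in R = A ∝ A/I, I0 = I ∝ 0 and J = I0 + R x = I ∝ A/I.
   Then x^2 = 0, Ann(x) = J and x R ∩ I0 = 0, so in a free R-module, hence in
   any projective one P, everything killed by x lies in J P and
   x P ∩ I0 P = 0.  Given an exact sequence W --g--> Y --f--> X with Y
   projective and z = f p with x z = 0 but z not in f (J Y), the element x p
   is in the image of g but not in g (J W): if x p = g (t + x u) with t in
   I0 W, then x (p - g u) lies in x Y ∩ I0 Y, so p - g u lies in J Y and is
   mapped to z.  Starting from x, which is killed by x but not in J M for
   M = I ∝ A/I or 0 ∝ A/I, this yields a nonzero element in every term of a
   projective resolution of M. *)

Section IdealSpan.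
Variables (R : comNzRingType) (p : pred R).

Inductive in_IM (M : lmodType R) : M -> Prop :=
| in_IM0 : in_IM 0
| in_IMZ r m : p r -> in_IM (r *: m)
| in_IMD m1 m2 : in_IM m1 -> in_IM m2 -> in_IM (m1 + m2).

Lemma in_IM_linear (M N : lmodType R) (f : {linear M -> N}) m :
  in_IM m -> in_IM (f m).
Proof.
elim=> [|r {}m pr|m1 m2 _ IH1 _ IH2]; first by rewrite linear0; exact: in_IM0.
  by rewrite linearZ; exact: in_IMZ.
by rewrite linearD; exact: in_IMD.
Qed.

End IdealSpan.

Section FreeModule.
Variables (R : comNzRingType) (P : lmodType R).
Local Notation F := {malg R[P]}.

Definition malg_eval (g : F) : P := \sum_(k <- msupp g) g@_k *: k.

Lemma malg_eval_fset g (D : {fset P}) : (msupp g `<=` D)%fset ->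
  malg_eval g = \sum_(k <- D) g@_k *: k.
Proof.
move=> sub; apply: big_fset_incl => // k _ kn.
by rewrite mcoeff_outdom // scale0r.
Qed.

Lemma malg_eval_is_linear : linear malg_eval.
Proof.
move=> a g h; set D := (msupp g `|` msupp h)%fset.
have sub : (msupp (a *: g + h) `<=` D)%fset.
  by apply: fsubset_trans (msuppD_le _ _) _; apply: fsetSU; exact: msuppZ_le.
rewrite (malg_eval_fset sub) (malg_eval_fset (fsubsetUl (msupp g) (msupp h))).
rewrite (malg_eval_fset (fsubsetUr (msupp g) (msupp h))) scaler_sumr -big_split.
by apply: eq_bigr => k _; rewrite mcoeffD mcoeffZ scalerDl scalerA.
Qed.

HB.instance Definition _ :=
  GRing.isLinear.Build R F P *:%R malg_eval malg_eval_is_linear.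

Lemma malg_evalU (k : P) : malg_eval << k >> = k.
Proof. by rewrite /malg_eval msuppU oner_eq0 big_seq_fset1 mcoeffUU scale1r. Qed.

Lemma malgU_scale (c : R) (k : P) : << c *g k >> = c *: << k >> :> F.
Proof.
apply/malgP => k'; rewrite mcoeffZ !mcoeffU.
by case: (k == k'); rewrite ?mulr1 ?mulr0.
Qed.

Lemma projective_retract : projective P ->
  exists h : {linear P -> F}, cancel h malg_eval.
Proof.
move=> projP.
have [h hK] := projP _ _ malg_eval (@idfun P : {linear P -> P})
  (fun k => ex_intro _ _ (malg_evalU k)).
by exists h.
Qed.

End FreeModule.

Section Adapted.
Variables (R : comNzRingType) (x : R) (I0 : idealr R).
Hypotheses (x_sqr0 : x * x = 0)
  (ann_x : forall r, x * r = 0 -> exists i c, i \in I0 /\ r = i + c * x)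
  (xR_meet_I0 : forall r, x * r \in I0 -> x * r = 0).

Definition in_JM (M : lmodType R) (m : M) : Prop :=
  exists t u, in_IM I0 t /\ m = t + x *: u.

Lemma in_JM0 (M : lmodType R) : in_JM (0 : M).
Proof. by exists 0, 0; rewrite scaler0 addr0; split; first exact: in_IM0. Qed.

Lemma in_JMD (M : lmodType R) (m1 m2 : M) :
  in_JM m1 -> in_JM m2 -> in_JM (m1 + m2).
Proof.
move=> [t1 [u1 [It1 ->]]] [t2 [u2 [It2 ->]]].
exists (t1 + t2), (u1 + u2).
by rewrite scalerDr addrACA; split; first exact: in_IMD.
Qed.

Lemma in_JM_linear (M N : lmodType R) (f : {linear M -> N}) m :
  in_JM m -> in_JM (f m).
Proof.
move=> [t [u [It ->]]]; exists (f t), (f u).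
by rewrite linearD linearZ; split; first exact: in_IM_linear.
Qed.

Record adapted (M : lmodType R) : Prop := Adapted {
  ann_x_sub_JM : forall q : M, x *: q = 0 -> in_JM q;
  xM_meet_I0M : forall q : M, in_IM I0 (x *: q) -> x *: q = 0 }.

Lemma in_I0M_mcoeff (P : lmodType R) (g : {malg R[P]}) k :
  in_IM I0 g -> g@_k \in I0.
Proof.
elim=> [|r h Ir|g1 g2 _ IH1 _ IH2]; first by rewrite mcoeff0 idealr0.
  by rewrite mcoeffZ mulrC idealMr.
by rewrite mcoeffD rpredD.
Qed.

Lemma free_adapted (P : lmodType R) : adapted {malg R[P]}.
Proof.
split=> q xq.
  rewrite (monalgE q); elim/big_ind: _ => [|m1 m2|k _].
  - exact: in_JM0.
  - exact: in_JMD.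
  - have /ann_x [i [c [Ii ->]]] : x * q@_k = 0 by rewrite -mcoeffZ xq mcoeff0.
    exists (i *: << k >>), (c *: << k >>); split; first exact: in_IMZ.
    by rewrite malgU_scale scalerDl scalerA mulrC.
apply/malgP => k; rewrite mcoeff0 mcoeffZ.
by apply: xR_meet_I0; rewrite -mcoeffZ; exact: in_I0M_mcoeff.
Qed.

Lemma adapted_retract (F P : lmodType R) (h : {linear P -> F})
    (s : {linear F -> P}) :
  cancel h s -> adapted F -> adapted P.
Proof.
move=> hK [annF meetF]; split=> q xq.
  by rewrite -[q]hK; apply/in_JM_linear/annF; rewrite -linearZ xq linear0.
have : x *: h q = 0 by apply: meetF; rewrite -linearZ; exact: in_IM_linear.
by rewrite -linearZ => /(congr1 s); rewrite hK linear0.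
Qed.

Lemma projective_adapted (P : lmodType R) : projective P -> adapted P.
Proof.
move=> /projective_retract [h hK]; exact: adapted_retract hK (free_adapted P).
Qed.

Definition x_witness (Y X : lmodType R) (f : {linear Y -> X}) (z : X) : Prop :=
  [/\ x *: z = 0, exists p, f p = z & ~ exists w, in_JM w /\ f w = z].

Lemma x_witness_neq0 (Y X : lmodType R) (f : {linear Y -> X}) :
  ~ x_witness f 0.
Proof.
by case=> _ _; apply; exists 0; rewrite linear0; split; first exact: in_JM0.
Qed.

Lemma x_witness_shift (W Y X : lmodType R) (g : {linear W -> Y})
    (f : {linear Y -> X}) (z : X) :
  adapted Y -> exact_at g f -> x_witness f z ->
  exists z', x_witness g z'.
Proof.
move=> [annY meetY] ex [xz [p fp] notJz]; exists (x *: p); split.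
- by rewrite scalerA x_sqr0 scale0r.
- by apply/ex; rewrite linearZ fp.
move=> [w [[t [u [It ->]]] gw]]; apply: notJz; exists (p - g u).
have fgu : f (g u) = 0 by apply/ex; exists u.
have xpgu : x *: (p - g u) = g t.
  by rewrite scalerDr scalerN -gw linearD linearZ addrK.
split; last by rewrite linearB fp fgu subr0.
by apply/annY/meetY; rewrite xpgu; exact: in_IM_linear.
Qed.

Lemma infinite_proj_dim_of_x_witness (M : lmodType R) (m : M) :
  x *: m = 0 -> ~ in_JM m -> infinite_proj_dim M.
Proof.
move=> xm notJm n [P [d [eps [projP P0 eps_onto ex0 exS]]]].
have wm : x_witness eps m.
  split=> // -[w [Jw epsw]].
  by apply: notJm; rewrite -epsw; exact: in_JM_linear.
have witness k : exists z, x_witness (d k) z.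
  elim: k => [|k [z wz]].
    exact: x_witness_shift (projective_adapted (projP _)) ex0 wm.
  exact: x_witness_shift (projective_adapted (projP _)) (exS k) wz.
have [z wz] := witness n.+1.
by rewrite (P0 _ (ltnSn n) z) in wz; exact: x_witness_neq0 wz.
Qed.

End Adapted.

Section TrivialExtension.
Variables (A : comNzRingType) (I : idealr A).
Local Notation R := (TE I).
Local Notation pi := (\pi_({ideal_quot I}))%qT.

Lemma pi_eq0 (a : A) : (pi a == 0) = (a \in I).
Proof. by rewrite -(rmorph0 pi) -Quotient.idealrBE subr0. Qed.

Lemma quotmod_scaleE (a : A) (e : quotmod I) : a *: e = pi a * e.
Proof. by []. Qed.

Definition te_x : R := (0, 1).

Definition I_prop_zero_pred : {pred R} :=
  [pred r : R | (r.1 \in I) && (r.2 == 0)].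

Lemma I_prop_zero_idealr_closed : idealr_closed I_prop_zero_pred.
Proof.
split; first by rewrite inE /= idealr0 eqxx.
  by rewrite inE /= idealr1.
move=> a u v /andP[u1I /eqP u20] /andP[v1I /eqP v20].
rewrite inE /= rpredD ?idealMr //= u20 v20 scaler0 add0r addr0 /=.
by move: u1I; rewrite -pi_eq0 quotmod_scaleE => /eqP ->; rewrite mul0r.
Qed.

HB.instance Definition _ :=
  isIdealr.Build R I_prop_zero_pred I_prop_zero_idealr_closed.

Lemma te_xM (c : R) : te_x * c = (0, pi c.1) :> A * quotmod I.
Proof. by rewrite triv_ext_mulE /= mul0r scale0r add0r quotmod_scaleE mulr1. Qed.

Lemma te_x_sqr0 : te_x * te_x = 0.
Proof. by rewrite te_xM rmorph0. Qed.

Lemma ann_te_x (r : R) : te_x * r = 0 ->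
  exists i c, i \in I_prop_zero_pred /\ r = i + c * te_x.
Proof.
case: r => a e; rewrite te_xM /= => -[/eqP]; rewrite pi_eq0 => aI.
exists (a, 0), (repr e, 0); split; first by rewrite inE /= aI eqxx.
rewrite mulrC te_xM /= reprK.
by change ((a, e) = (a + 0, 0 + e) :> A * quotmod I); rewrite addr0 add0r.
Qed.

Lemma te_xR_meet_I_prop_zero (r : R) :
  te_x * r \in I_prop_zero_pred -> te_x * r = 0.
Proof. by rewrite inE te_xM /= => /andP[_ /eqP ->]. Qed.

Section SubmodulesOfJ.
Variable S : submodClosed R^o.
Hypothesis S_sub_J : forall v : R^o, v \in S -> v.1 \in I.

Lemma in_I_prop_zeroM_snd (y : submod S) :
  in_IM I_prop_zero_pred y -> (val y).2 = 0.
Proof.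
elim=> [|r s /andP[r1I /eqP r20]|y1 y2 _ IH1 _ IH2].
- by rewrite GRing.val0.
- have /eqP s10 : pi (val s).1 == 0 by rewrite pi_eq0 S_sub_J ?(valP s).
  have /eqP r10 : pi r.1 == 0 by rewrite pi_eq0.
  by rewrite GRing.valZ /= !quotmod_scaleE s10 r10 r20 !mul0r addr0.
- by rewrite GRing.valD /= IH1 IH2 addr0.
Qed.

Lemma infinite_proj_dim_submod : te_x \in S -> infinite_proj_dim (submod S).
Proof.
move=> Sx; apply: (infinite_proj_dim_of_x_witness te_x_sqr0 ann_te_x
  te_xR_meet_I_prop_zero (m := SubMod Sx)).
  by apply: val_inj; rewrite GRing.valZ GRing.val0; exact: te_x_sqr0.
move=> [t [u [It /(congr1 (fun y : submod S => (val y).2))]]].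
rewrite GRing.valD GRing.valZ /= in_I_prop_zeroM_snd // scale0r !add0r.
rewrite quotmod_scaleE mulr1.
have /eqP -> : pi (val u).1 == 0 by rewrite pi_eq0 S_sub_J ?(valP u).
by move/eqP; rewrite oner_eq0.
Qed.

End SubmodulesOfJ.
End TrivialExtension.

Theorem lemma1p2 (A : comNzRingType) (I : idealr A) :
  infinite_proj_dim (I_prop_mod I) /\ infinite_proj_dim (zero_prop_mod I).
Proof.
split; apply: infinite_proj_dim_submod => [v|]; rewrite inE /= ?idealr0 //.
by move/eqP ->; exact: idealr0.
Qed.
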